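(* The sequence $\rho_d$ satisfies $\min_{d\geqslant2}\rho_d>0$, and there is a numerical constant $C>0$ such that $\frac1{C(d+2)^2}\leqslant1-\rho_d$ for all $d\geqslant2$.
   Context: Let $g(\theta)=\cos^{-1}\!\big(\frac{(\pi-\theta)\cos\theta+\sin\theta}{\pi}\big)$, $\breve\theta_0=\pi$, $\breve\theta_i=g(\breve\theta_{i-1})$ for $i\geqslant1$, and $\rho_d:=\frac{2\sin\breve\theta_d}{\pi}+\frac{\pi-2\breve\theta_d}{\pi}\sum_{i=0}^{d-1}\frac{\sin\breve\theta_i}{\pi}\prod_{j=i+1}^{d-1}\frac{\pi-\breve\theta_j}{\pi}$. *)

From Stdlib Require Import Reals List.
Open Scope R_scope.

Definition g (t : R) : R := acos (((PI - t) * cos t + sin t) / PI).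

Fixpoint theta (i : nat) : R :=
  match i with
  | O => PI
  | S k => g (theta k)
  end.

Definition sumR (a b : nat) (f : nat -> R) : R :=
  fold_right Rplus 0 (map f (seq a (b - a))).

Definition prodR (a b : nat) (f : nat -> R) : R :=
  fold_right Rmult 1 (map f (seq a (b - a))).

Definition rho (d : nat) : R :=
  2 * sin (theta d) / PI
  + (PI - 2 * theta d) / PI *
    sumR 0 d (fun i => sin (theta i) / PI *
                       prodR (S i) d (fun j => (PI - theta j) / PI)).

From Stdlib Require Import Reals Lra Lia List.
From Coquelicot Require Import Coquelicot.
Open Scope R_scope.

(* Writing kappa t = ((PI - t) cos t + sin t) / PI, we have cos theta_(d+1) = kappa theta_d,
   and the sum S_d in rho_d satisfies S_(d+1) = S_d (PI - theta_d) / PI + sin theta_d / PI,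
   the same recursion, so S_d = cos theta_d for d >= 1.
   Hence rho_d = phi theta_d with phi t = (2 sin t + (PI - 2t) cos t) / PI, which
   decreases on [0, PI/2].  Since sin t >= t cos t, kappa >= cos and theta_d decreases
   from theta_1 = PI/2: rho_d increases, and rho_d >= phi (PI/2) = 2/PI.  Taylor bounds
   give kappa (1/n) <= cos (1/(n+1)), whence theta_d >= 1/(d+2) by induction, and
   1 - phi t >= t^2/20 on [0, 3/2], which contains every theta_d with d >= 2. *)

Lemma PI_ge_3 : 3 <= PI.
Proof. pose proof PI2_3_2. lra. Qed.

Lemma cos_approx_4 a : cos_approx a 4 = 1 - a^2/2 + a^4/24 - a^6/720 + a^8/40320.
Proof.
  unfold cos_approx, cos_term. cbn [sum_f_R0 Nat.mul Nat.add].
  rewrite !fact_simpl, !mult_INR. simpl INR. field.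
Qed.

Lemma cos_approx_3 a : cos_approx a 3 = 1 - a^2/2 + a^4/24 - a^6/720.
Proof.
  unfold cos_approx, cos_term. cbn [sum_f_R0 Nat.mul Nat.add].
  rewrite !fact_simpl, !mult_INR. simpl INR. field.
Qed.

Lemma sin_approx_4 a : sin_approx a 4 = a - a^3/6 + a^5/120 - a^7/5040 + a^9/362880.
Proof.
  unfold sin_approx, sin_term. cbn [sum_f_R0 Nat.mul Nat.add].
  rewrite !fact_simpl, !mult_INR. simpl INR. field.
Qed.

Lemma cos_le_taylor4 x : 0 <= x <= PI/2 -> cos x <= 1 - x^2/2 + x^4/24.
Proof.
  intros Hx. pose proof PI_4.
  destruct (COS x) as [_ Hub]; try lra.
  unfold cos_ub in Hub. rewrite cos_approx_4 in Hub.
  assert (x^2 <= 4) by nra. assert (0 <= x^6) by (apply pow_le; lra).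
  assert (x^6 * (x^2 - 56) <= 0) by nra.
  nra.
Qed.

Lemma cos_ge_taylor6 x : 0 <= x <= PI/2 -> 1 - x^2/2 + x^4/24 - x^6/720 <= cos x.
Proof.
  intros Hx. destruct (COS x) as [Hlb _]; try lra.
  unfold cos_lb in Hlb. rewrite cos_approx_3 in Hlb. lra.
Qed.

Lemma sin_le_taylor5 x : 0 <= x <= PI -> sin x <= x - x^3/6 + x^5/120.
Proof.
  intros Hx. pose proof PI_4.
  destruct (SIN x) as [_ Hub]; try lra.
  unfold sin_ub in Hub. rewrite sin_approx_4 in Hub.
  assert (x^2 <= 16) by nra. assert (0 <= x^7) by (apply pow_le; lra).
  assert (x^7 * (x^2 - 72) <= 0) by nra.
  nra.
Qed.

Lemma nondecreasing_of_derive_nonneg (f f' : R -> R) a b :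
  (forall c, a <= c <= b -> derivable_pt_lim f c (f' c)) ->
  (forall c, a < c < b -> 0 <= f' c) ->
  forall x y, a <= x -> x <= y -> y <= b -> f x <= f y.
Proof.
  intros Hd Hpos x y Hx Hxy Hy.
  destruct (Req_dec x y) as [->|Hne]; [lra|].
  destruct (MVT_cor2 f f' x y) as [c [Heq Hc]]; [lra | intros; apply Hd; lra |].
  assert (0 <= f' c) by (apply Hpos; lra).
  nra.
Qed.

Lemma sin_gt_0_open t : 0 < t < PI -> 0 < sin t.
Proof. intros. apply sin_gt_0; lra. Qed.

Lemma mul_cos_le_sin t : 0 <= t <= PI -> t * cos t <= sin t.
Proof.
  intros Ht.
  assert (sin 0 - 0 * cos 0 <= sin t - t * cos t); [|rewrite sin_0 in *; lra].
  apply (nondecreasing_of_derive_nonneg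
           (fun t => sin t - t * cos t) (fun t => t * sin t) 0 PI); try lra.
  - intros c _. apply is_derive_Reals. auto_derive; auto. ring.
  - intros c Hc. pose proof (sin_gt_0_open c Hc). nra.
Qed.

Definition kappa (t : R) : R := ((PI - t) * cos t + sin t) / PI.

Definition phi (t : R) : R := 2 * sin t / PI + (PI - 2 * t) / PI * cos t.

Lemma kappa_antimono x y : 0 <= x -> x <= y -> y <= PI -> kappa y <= kappa x.
Proof.
  intros. pose proof PI_RGT_0.
  enough (- kappa x <= - kappa y) by lra.
  apply (nondecreasing_of_derive_nonneg
           (fun t => - kappa t) (fun t => (PI - t) * sin t / PI) 0 PI); auto.
  - intros c _. apply is_derive_Reals. unfold kappa. auto_derive; auto. field. lra.
  - intros c Hc. pose proof (sin_gt_0_open c Hc).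
    apply Rdiv_le_0_compat; nra.
Qed.

Lemma phi_antimono x y : 0 <= x -> x <= y -> y <= PI/2 -> phi y <= phi x.
Proof.
  intros. pose proof PI_RGT_0.
  enough (- phi x <= - phi y) by lra.
  apply (nondecreasing_of_derive_nonneg
           (fun t => - phi t) (fun t => (PI - 2 * t) * sin t / PI) 0 (PI/2)); auto.
  - intros c _. apply is_derive_Reals. unfold phi. auto_derive; auto. field. lra.
  - intros c Hc. assert (0 < sin c) by (apply sin_gt_0_open; lra).
    apply Rdiv_le_0_compat; nra.
Qed.

Lemma phi_PI2 : phi (PI/2) = 2 / PI.
Proof. unfold phi. rewrite sin_PI2, cos_PI2. field. apply PI_neq0. Qed.

Lemma kappa_0 : kappa 0 = 1.
Proof. unfold kappa. rewrite cos_0, sin_0. field. apply PI_neq0. Qed.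

Lemma kappa_PI : kappa PI = 0.
Proof. unfold kappa. rewrite sin_PI. field. apply PI_neq0. Qed.

Lemma kappa_bounds t : 0 <= t <= PI -> 0 <= kappa t <= 1.
Proof.
  intros. pose proof PI_RGT_0. split.
  - rewrite <- kappa_PI. apply kappa_antimono; lra.
  - rewrite <- kappa_0. apply kappa_antimono; lra.
Qed.

Lemma cos_le_kappa t : 0 <= t <= PI -> cos t <= kappa t.
Proof.
  intros Ht. pose proof PI_RGT_0. pose proof (mul_cos_le_sin t Ht).
  assert (kappa t - cos t = (sin t - t * cos t) / PI) by (unfold kappa; field; lra).
  assert (0 <= (sin t - t * cos t) / PI) by (apply Rdiv_le_0_compat; lra).
  lra.
Qed.

Lemma theta_bounds d : 0 <= theta d <= PI.
Proof. destruct d; [simpl; pose proof PI_RGT_0; lra | apply acos_bound]. Qed.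

Lemma cos_theta_S d : cos (theta (S d)) = kappa (theta d).
Proof. apply cos_acos. pose proof (kappa_bounds _ (theta_bounds d)). lra. Qed.

Lemma theta_S_le d : theta (S d) <= theta d.
Proof.
  pose proof (theta_bounds d). pose proof (theta_bounds (S d)).
  apply cos_decr_0; try lra.
  rewrite cos_theta_S. apply cos_le_kappa. lra.
Qed.

Lemma theta_antimono d m : (d <= m)%nat -> theta m <= theta d.
Proof. induction 1; [lra|]. pose proof (theta_S_le m). lra. Qed.

Lemma theta_1 : theta 1 = PI/2.
Proof. change (acos (kappa PI) = PI/2). rewrite kappa_PI. apply acos_0. Qed.

Lemma theta_le_PI2 d : (1 <= d)%nat -> theta d <= PI/2.
Proof. intros. rewrite <- theta_1. apply theta_antimono. lia. Qed.

Lemma theta_2_le : theta 2 <= 3/2.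
Proof.
  pose proof PI2_3_2. pose proof PI_4. pose proof (theta_bounds 2).
  apply cos_decr_0; try lra.
  rewrite cos_theta_S, theta_1. unfold kappa. rewrite cos_PI2, sin_PI2.
  replace (((PI - PI/2) * 0 + 1) / PI) with (/ PI) by (field; lra).
  assert (/ 4 <= / PI) by (apply Rinv_le_contravar; lra).
  pose proof (cos_le_taylor4 (3/2)). lra.
Qed.

Lemma seq_snoc a b : (a <= b)%nat -> seq a (S b - a) = seq a (b - a) ++ b :: nil.
Proof.
  intros. replace (S b - a)%nat with (S (b - a)) by lia.
  rewrite seq_S. do 3 f_equal. lia.
Qed.

Lemma sumR_S a b f : (a <= b)%nat -> sumR a (S b) f = sumR a b f + f b.
Proof.
  intros. unfold sumR. rewrite seq_snoc, map_app, fold_right_app by lia. simpl.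
  induction (map f (seq a (b - a))) as [|x l IH]; simpl; lra.
Qed.

Lemma prodR_S a b f : (a <= b)%nat -> prodR a (S b) f = prodR a b f * f b.
Proof.
  intros. unfold prodR. rewrite seq_snoc, map_app, fold_right_app by lia. simpl.
  induction (map f (seq a (b - a))) as [|x l IH]; simpl; [ring | rewrite IH; ring].
Qed.

Lemma prodR_empty a f : prodR a a f = 1.
Proof. unfold prodR. rewrite Nat.sub_diag. reflexivity. Qed.

Lemma sumR_ext a b f f' :
  (forall i, (a <= i < b)%nat -> f i = f' i) -> sumR a b f = sumR a b f'.
Proof.
  intros Hf. unfold sumR. f_equal. apply map_ext_in.
  intros i Hi. apply in_seq in Hi. apply Hf. lia.
Qed.

Lemma sumR_mult_r a b f c : sumR a b (fun i => f i * c) = sumR a b f * c.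
Proof. unfold sumR. induction (seq a (b - a)) as [|x l IH]; simpl; lra. Qed.

Lemma sumR_prodR_S (u v : nat -> R) d :
  sumR 0 (S d) (fun i => u i * prodR (S i) (S d) v)
  = sumR 0 d (fun i => u i * prodR (S i) d v) * v d + u d.
Proof.
  rewrite sumR_S, prodR_empty, Rmult_1_r, <- sumR_mult_r by lia. f_equal.
  apply sumR_ext. intros i Hi. rewrite prodR_S by lia. ring.
Qed.

Lemma theta_sum_eq_cos d : (1 <= d)%nat ->
  sumR 0 d (fun i => sin (theta i) / PI * prodR (S i) d (fun j => (PI - theta j) / PI))
  = cos (theta d).
Proof.
  pose proof PI_RGT_0.
  induction 1 as [|d Hd IH]; rewrite sumR_prodR_S.
  - change (sumR 0 0 _) with 0. change (theta 0) with PI.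
    rewrite theta_1, sin_PI, cos_PI2. field. lra.
  - rewrite IH, cos_theta_S. unfold kappa. field. lra.
Qed.

Lemma rho_eq_phi d : (1 <= d)%nat -> rho d = phi (theta d).
Proof. intros. unfold rho. rewrite theta_sum_eq_cos by assumption. reflexivity. Qed.

Lemma rho_mono d m : (1 <= d <= m)%nat -> rho d <= rho m.
Proof.
  intros. rewrite !rho_eq_phi by lia.
  pose proof (theta_antimono d m ltac:(lia)). pose proof (theta_bounds m).
  pose proof (theta_le_PI2 d ltac:(lia)).
  apply phi_antimono; lra.
Qed.

Lemma rho_ge_2_div_PI d : (1 <= d)%nat -> 2 / PI <= rho d.
Proof.
  intros. rewrite rho_eq_phi, <- phi_PI2 by assumption.
  pose proof (theta_bounds d). pose proof (theta_le_PI2 d H).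
  apply phi_antimono; lra.
Qed.

(* y = x / (1 + x) encodes 1/(n+1) in terms of x = 1/n. *)
Lemma kappa_le_cos_poly p x y : 3 <= p <= 4 -> 0 < x <= 1/2 -> y * (1 + x) = x -> 0 < y ->
  (p - x) * (1 - x^2/2 + x^4/24) + (x - x^3/6 + x^5/120)
  <= p * (1 - y^2/2 + y^4/24 - y^6/720).
Proof.
  intros Hp Hx Hy Hy0.
  assert (y < x) by nra.
  assert (Hdiff : (x^2 - y^2) * (1 + x)^2 = x^3 * (2 + x)).
  { assert (y = x / (1 + x)) by (field_simplify_eq; lra). subst y. field. lra. }
  assert (Hgap : x^2 - y^2 >= x^3 * 10/9).
  { assert (8 - 11*x - 10*x^2 >= 0) by nra.
    assert (0 < (1 + x)^2) by nra.
    apply Rle_ge, Rmult_le_reg_r with ((1 + x)^2); [nra|]. rewrite Hdiff. nra. }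
  assert (y^6 <= x^4/4).
  { assert (y^6 <= x^6) by (apply pow_incr; lra). assert (x^2 <= 1/4) by nra. nra. }
  assert (0 < x^3) by (apply pow_lt; lra).
  assert (y^4 >= 0) by nra. assert (x^5 >= 0) by nra.
  assert (p * x^4 <= 2 * x^3) by nra.
  assert (p * (x^2 - y^2) >= p * (x^3 * 10/9)) by nra.
  assert (p * y^6 <= p * (x^4/4)) by nra.
  nra.
Qed.

Lemma kappa_inv_le_cos_inv n : 2 <= n -> kappa (1/n) <= cos (1/(n + 1)).
Proof.
  intros Hn. pose proof PI_ge_3. pose proof PI_4.
  set (x := 1/n). set (y := 1/(n + 1)).
  assert (0 < x <= 1/2).
  { unfold x. split; [apply Rdiv_lt_0_compat; lra|].
    apply Rmult_le_reg_r with n; [lra|]. field_simplify; lra. }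
  assert (0 < y) by (apply Rdiv_lt_0_compat; lra).
  assert (y * (1 + x) = x) by (unfold x, y; field; lra).
  assert (y < x) by nra.
  pose proof (cos_le_taylor4 x ltac:(lra)). pose proof (sin_le_taylor5 x ltac:(lra)).
  pose proof (cos_ge_taylor6 y ltac:(lra)).
  pose proof (kappa_le_cos_poly PI x y ltac:(lra) ltac:(lra) ltac:(lra) ltac:(lra)).
  unfold kappa. apply Rmult_le_reg_r with PI; [lra|].
  unfold Rdiv at 1. rewrite Rmult_assoc, Rinv_l by lra. nra.
Qed.

Lemma theta_ge_inv d : 1 / (INR d + 2) <= theta d.
Proof.
  pose proof PI_ge_3.
  induction d as [|d IH]; [simpl; lra|].
  pose proof (pos_INR d). pose proof (theta_bounds d). pose proof (theta_bounds (S d)).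
  rewrite S_INR.
  assert (0 <= 1 / (INR d + 1 + 2) <= PI).
  { split; [apply Rdiv_le_0_compat; lra|].
    apply Rle_trans with 1; [|lra]. apply Rmult_le_reg_r with (INR d + 1 + 2); [lra|].
    field_simplify; lra. }
  apply cos_decr_0; try lra.
  rewrite cos_theta_S.
  apply Rle_trans with (kappa (1 / (INR d + 2))).
  - apply kappa_antimono; try lra. apply Rdiv_le_0_compat; lra.
  - replace (INR d + 1 + 2) with (INR d + 2 + 1) by ring.
    apply kappa_inv_le_cos_inv. lra.
Qed.

Lemma one_sub_phi_poly t : 0 <= t <= 1.6 ->
  t^2/20 <= 1 - (1 - t^2/2 + t^4/24)
            - 2/3 * ((t - t^3/6 + t^5/120) - t * (1 - t^2/2 + t^4/24 - t^6/720)).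
Proof.
  intros Ht.
  assert (0 <= 9/20 - 2*t/9 - t^2/24 + t^3/45 - t^5/1080).
  { assert (t^2 <= 2.56) by nra.
    assert (t^5 <= 10.5) by (assert (t^3 <= 4.1) by nra; nra).
    destruct (Rle_lt_dec t 1).
    - assert (t^2 <= 1) by nra. assert (0 <= t^3) by (apply pow_le; lra). lra.
    - assert (t^3 >= t^2) by nra. lra. }
  assert (0 <= t^2 * (9/20 - 2*t/9 - t^2/24 + t^3/45 - t^5/1080))
    by (apply Rmult_le_pos; nra).
  lra.
Qed.

Lemma one_sub_phi_ge t : 0 <= t <= 3/2 -> t^2/20 <= 1 - phi t.
Proof.
  intros Ht. pose proof PI_ge_3. pose proof PI_4. pose proof PI2_3_2.
  pose proof (cos_le_taylor4 t ltac:(lra)). pose proof (cos_ge_taylor6 t ltac:(lra)).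
  pose proof (sin_le_taylor5 t ltac:(lra)). pose proof (mul_cos_le_sin t ltac:(lra)).
  pose proof (one_sub_phi_poly t ltac:(lra)).
  assert (1 - phi t = 1 - cos t - 2 / PI * (sin t - t * cos t)) by (unfold phi; field; lra).
  assert (2 / PI <= 2 / 3) by (apply Rmult_le_compat_l, Rinv_le_contravar; lra).
  nra.
Qed.

Lemma one_sub_rho_ge d : (2 <= d)%nat -> 1 / (20 * (INR d + 2) ^ 2) <= 1 - rho d.
Proof.
  intros Hd. rewrite rho_eq_phi by lia.
  pose proof (theta_antimono 2 d Hd). pose proof theta_2_le. pose proof (theta_bounds d).
  pose proof (theta_ge_inv d). pose proof (pos_INR d).
  assert (0 <= 1 / (INR d + 2)) by (apply Rdiv_le_0_compat; lra).
  replace (1 / (20 * (INR d + 2) ^ 2)) with ((1 / (INR d + 2)) ^ 2 / 20) by (field; lra).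
  apply Rle_trans with (theta d ^ 2 / 20).
  - apply Rmult_le_compat_r; [lra|]. apply pow_incr. lra.
  - apply one_sub_phi_ge. lra.
Qed.

Theorem lemma22 :
  (exists d0 : nat, (2 <= d0)%nat /\ 0 < rho d0 /\
     forall d : nat, (2 <= d)%nat -> rho d0 <= rho d) /\
  (exists C : R, 0 < C /\
     forall d : nat, (2 <= d)%nat -> 1 / (C * (INR d + 2) ^ 2) <= 1 - rho d).
Proof.
  split.
  - exists 2%nat. split; [lia|]. split.
    + apply Rlt_le_trans with (2 / PI); [|apply rho_ge_2_div_PI; lia].
      apply Rdiv_lt_0_compat; [lra | apply PI_RGT_0].
    + intros d Hd. apply rho_mono. lia.
  - exists 20. split; [lra|]. exact one_sub_rho_ge.
Qed.
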